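(* Consider a congestion game with $m\ge1$ players and $F\ge 2$ facilities in which every player has the full action space $\mathcal A_i=2^{\mathcal F}$, and let $\bm a^*$ be a pure Nash equilibrium. Let $S=\{\bm a^*\}\cup\{(a^*_i\,\triangle\,\{f\},\bm a^*_{-i}): i\in[m],\ f\in\mathcal F\}$ (the NE together with all joint actions in which exactly one player toggles membership of exactly one facility; $|S|=mF+1$), let $\rho$ be uniform on $S$, and let $\bm a^1,\dots,\bm a^n$ be i.i.d. from $\rho$. Let $\delta\in(0,1)$. If $n\ge 8(mF+1)\log((mF+1)/\delta)$, then with probability at least $1-\delta$, for every $i\in[m]$ and every $\pi_i\in\Delta(\mathcal A_i)$, $$V\succeq I+\frac{n}{2mF^4}\,\mathbb E_{\bm a\sim(\pi_i,\bm a^*_{-i})}\big[A_i(\bm a)A_i(\bm a)^\top\big],$$ where $(\pi_i,\bm a^*_{-i})$ denotes the policy in which player $i$ plays $\pi_i$ and every other player $j$ plays $a^*_j$ deterministically. That is, Assumption (Weak Covariance Domination) holds with $C_{\mathrm{agent}}=\frac{1}{2mF^4}$ and $\pi^*=\bm a^*$.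
   Context: Congestion game: $m$ players, finite facility set $\mathcal F$ with $F=|\mathcal F|$, action sets $\mathcal A_i\subseteq 2^{\mathcal F}$, $\mathcal A=\prod_i\mathcal A_i$, $n^f(\bm a)=|\{i: f\in a_i\}|$; facility $f$ with $\ell\ge1$ users has mean reward $r^f(\ell)$ and player $i$'s mean reward is $r_i(\bm a)=\sum_{f\in a_i}r^f(n^f(\bm a))$. A pure Nash equilibrium is a joint action $\bm a^*$ such that no player can increase $r_i$ by changing only its own action. Feature map: let $d=mF$ and index the coordinates of $\mathbb R^d$ by pairs $(f,\ell)$ with $f\in\mathcal F$, $\ell\in\{1,\dots,m\}$; let $e_{(f,\ell)}$ be the standard basis vectors. For $i\in[m]$ and $\bm a\in\mathcal A$, $A_i(\bm a)=\sum_{f\in a_i}e_{(f,n^f(\bm a))}\in\{0,1\}^d$, so that $r_i(\bm a)=\langle A_i(\bm a),\theta\rangle$ with $\theta_{(f,\ell)}=r^f(\ell)$. Agent-level covariance matrix: $V=I+\sum_{k=1}^n\sum_{i=1}^m A_i(\bm a^k)A_i(\bm a^k)^\top$, where $\bm a^1,\dots,\bm a^n$ are the joint actions in the dataset. $\succeq$ is the positive semidefinite (Loewner) order. *)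

From HB Require Import structures.
From mathcomp Require Import all_boot all_order all_algebra.
From mathcomp Require Import boolp reals exp.
Set Implicit Arguments. Unset Strict Implicit. Unset Printing Implicit Defensive.
Import Order.TTheory GRing.Theory Num.Theory.
Local Open Scope ring_scope.

Section Congestion.
Variables (R : realType) (m : nat) (T : finType).

Definition joint := {ffun 'I_m -> {set T}}.

Definition load (a : joint) (f : T) : nat := #|[set i | f \in a i]|.

Definition reward (r : T -> nat -> R) (a : joint) (i : 'I_m) : R :=
  \sum_(f in a i) r f (load a f).

Definition upd (a : joint) (i : 'I_m) (s : {set T}) : joint :=
  [ffun j => if j == i then s else a j].

Definition is_pure_NE (r : T -> nat -> R) (a : joint) : Prop :=
  forall (i : 'I_m) (s : {set T}), reward r (upd a i s) i <= reward r a i.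

Definition toggle (a : joint) (i : 'I_m) (f : T) : joint :=
  upd a i ((a i :\: [set f]) :|: ([set f] :\: a i)).

Definition suppS (a : joint) : {set joint} :=
  a |: [set toggle a i f | i : 'I_m, f : T].

(* feature coordinates (f, l) with l in {1..m}; l is encoded by the ordinal l-1 *)
Definition coord := (T * 'I_m)%type.
Definition dim := #|{: coord}|.

(* A_i(a) = sum_{f in a_i} e_{(f, n^f(a))}, as a column vector in R^d, d = mF *)
Definition feat (a : joint) (i : 'I_m) : 'cV[R]_dim :=
  \col_(j < dim)
    (let: (f, l) := enum_val j in
     if (f \in a i) && (load a f == l.+1)%N then 1 else 0).

Definition outer (v : 'cV[R]_dim) : 'M[R]_dim := v *m v^T.

Definition covV (n : nat) (w : {ffun 'I_n -> joint}) : 'M[R]_dim :=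
  1%:M + \sum_(k < n) \sum_(i < m) outer (feat (w k) i).

Definition psd (M : 'M[R]_dim) : Prop :=
  forall x : 'cV[R]_dim, 0 <= (x^T *m M *m x) 0 0.
Definition loewner_ge (M N : 'M[R]_dim) : Prop := psd (M - N).

Definition is_dist (p : {ffun {set T} -> R}) : Prop :=
  (forall s, 0 <= p s) /\ \sum_s p s = 1.

Definition exp_outer (astar : joint) (i : 'I_m) (p : {ffun {set T} -> R}) : 'M[R]_dim :=
  \sum_(s : {set T}) p s *: outer (feat (upd astar i s) i).

Definition good_event (astar : joint) (n : nat) (w : {ffun 'I_n -> joint}) : Prop :=
  forall (i : 'I_m) (p : {ffun {set T} -> R}), is_dist p ->
    loewner_ge (covV w)
      (1%:M + (n%:R / (2 * m%:R * (#|T|%:R) ^+ 4)) *: exp_outer astar i p).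

Definition prob_iid_unif (S : {set joint}) (n : nat)
    (E : {ffun 'I_n -> joint} -> Prop) : R :=
  (\sum_(w : {ffun 'I_n -> joint} | [forall k, w k \in S]) (`[< E w >])%:R)
    / (#|S|%:R ^+ n).

End Congestion.

From Pilot Require Import Defs.

(* With [n >= 8 N ln (N / delta)] uniform draws from the [N = mF + 1] points of [S],
   Chernoff's bound and a union bound show that with probability [>= 1 - delta]
   every point of [S] is drawn at least [n / (2N)] times.  On that event the bound
   holds deterministically.  Write [a] for the equilibrium.  Coordinate [(f, l)] of
   [A_i(s, a_{-i})] only depends on whether [f \in s], so
   [A_i(s, a_{-i}) = (1 - k) A_i(a) + sum_g A_i(toggle a i g)], the sum ranging over
   the [k <= F] facilities [g] in the symmetric difference of [s] and [a_i].  By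
   Cauchy-Schwarz, [<x, A_i(s, a_{-i})>^2 <= F^2 (<x, A_i(a)>^2 +
   sum_g <x, A_i(toggle a i g)>^2)], each term on the right occurs at least
   [n / (2N)] times in [V], and [F^2 / (2 m F^4) <= 1 / (2N)]. *)

From HB Require Import structures.
From mathcomp Require Import all_boot all_order all_algebra.
From mathcomp Require Import boolp reals exp sequences.
From mathcomp Require Import ring lra zify.
Set Implicit Arguments. Unset Strict Implicit. Unset Printing Implicit Defensive.
Import Order.TTheory GRing.Theory Num.Theory.
Local Open Scope ring_scope.

Section UniformSamples.
Variables (R : realType) (J : finType) (S : {set J}) (n : nat).

Definition nhits (w : {ffun 'I_n -> J}) (b : J) : nat := #|[set k | w k == b]|.

Lemma big_ffun_in_prod (F : J -> R) :
  \sum_(w : {ffun 'I_n -> J} | [forall k, w k \in S]) \prod_(k < n) F (w k)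
   = (\sum_(x in S) F x) ^+ n.
Proof.
rewrite -[in RHS](card_ord n) -prodr_const.
rewrite (bigA_distr_big (fun x => x \in S) (fun _ x => F x)) /=.
by apply: eq_bigl => w; apply/forallP/ffun_onP.
Qed.

Lemma sum_exp_nhits (z : R) b : b \in S ->
  \sum_(w : {ffun 'I_n -> J} | [forall k, w k \in S]) z ^+ nhits w b
   = (#|S|%:R - 1 + z) ^+ n.
Proof.
move=> bS.
have prod_nhits (w : {ffun 'I_n -> J}) :
    \prod_(k < n) (if w k == b then z else 1) = z ^+ nhits w b.
  by rewrite -big_mkcond -prodr_const; apply: eq_bigl => k; rewrite inE.
under eq_bigr do rewrite -prod_nhits.
rewrite (big_ffun_in_prod (fun x => if x == b then z else 1)).
congr (_ ^+ _); rewrite (big_setD1 b) //= eqxx (eq_bigr (fun _ => 1)).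
  by rewrite sumr_const (cardsD1 b S) bS natrD /=; lra.
by move=> x; rewrite !inE => /andP[/negbTE ->].
Qed.

Lemma sum_nhits (w : {ffun 'I_n -> J}) (h : J -> R) : [forall k, w k \in S] ->
  \sum_(k < n) h (w k) = \sum_(b in S) (nhits w b)%:R * h b.
Proof.
move=> /forallP wS.
have split_hits k : h (w k) = \sum_(b in S) (if w k == b then h b else 0).
  rewrite (bigD1 (w k)) //= eqxx big1 ?addr0 // => b /andP[_ hb].
  by rewrite eq_sym (negbTE hb).
rewrite (eq_bigr _ (fun k _ => split_hits k)) exchange_big; apply: eq_bigr => b _.
rewrite -big_mkcond (eq_bigl (mem [set k | w k == b])) ?sumr_const ?mulr_natl //.
by move=> k; rewrite /= inE.
Qed.

(* Chernoff's method: [1{nhits w b < c} <= e^(t c) z^(nhits w b)] with [z = e^-t],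
   then a union bound over [b in S]. *)
Lemma card_undercovered_le (t c : R) : 0 <= t ->
  \sum_(w : {ffun 'I_n -> J} | [forall k, w k \in S])
     [exists (b | b \in S), (nhits w b)%:R < c]%:R
   <= #|S|%:R * expR (t * c) * (#|S|%:R - 1 + expR (- t)) ^+ n.
Proof.
move=> t0.
have markov (w : {ffun 'I_n -> J}) : [exists (b | b \in S), (nhits w b)%:R < c]%:R
    <= \sum_(b in S) expR (t * c) * expR (- t) ^+ nhits w b :> R.
  have terms_ge0 b : 0 <= expR (t * c) * expR (- t) ^+ nhits w b.
    by rewrite mulr_ge0 ?exprn_ge0 ?expR_ge0.
  case: exists_inP => [[b bS hb] | _]; last exact: sumr_ge0.
  rewrite (bigD1 b) //= -[1]addr0 lerD ?sumr_ge0 //.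
  by rewrite -expRM_natl -expRD -[X in X <= _]expR0 ler_expR; nra.
apply: le_trans (ler_sum _ (fun w _ => markov w)) _.
rewrite exchange_big /= (eq_bigr (fun=> expR (t * c) * (#|S|%:R - 1 + expR (- t)) ^+ n)).
  by rewrite sumr_const -[_ *+ #|S|]mulr_natl mulrA.
by move=> b bS; rewrite -mulr_sumr sum_exp_nhits.
Qed.

End UniformSamples.

Lemma expRN34_le_half (R : realType) : expR (- (3/4)) <= 1/2 :> R.
Proof.
rewrite expRN div1r lef_pV2 ?posrE ?expR_gt0 //.
have -> : 3/4 = 8%:R * (3/32) :> R by field.
rewrite expRM_natl.
have := expR_ge1Dx (3/32 : R); set x := expR _ => x_ge.
have x2 : 1196/1000 <= x ^+ 2 by rewrite expr2; nra.
have x4 : 143/100 <= x ^+ 4 by rewrite (exprM x 2 2) [_ ^+ 2]expr2; nra.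
by rewrite (exprM x 4 2) expr2; nra.
Qed.

(* With [t = 3/4] and [c = n/(2N)]: [N - 1 + e^(-3/4) <= N - 1/2 <= N e^(-1/(2N))],
   so the bound is at most [N^n N e^(-n/(8N))]. *)
Lemma undercovered_bound_le (R : realType) (N n : nat) (delta : R) :
  (0 < N)%N -> 0 < delta -> 8 * N%:R * ln (N%:R / delta) <= n%:R ->
  N%:R * expR (3/4 * (n%:R / (2 * N%:R))) * (N%:R - 1 + expR (- (3/4))) ^+ n
   <= delta * N%:R ^+ n.
Proof.
move=> N_gt0 delta_gt0 hn.
have Nr_gt0 : (0 : R) < N%:R by rewrite ltr0n.
have N_neq0 : N%:R != 0 :> R by rewrite gt_eqF.
have base_le : N%:R - 1 + expR (- (3/4)) <= N%:R * expR (- (1 / (2 * N%:R))) :> R.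
  have -> : N%:R - 1 + expR (- (3/4)) =
            N%:R * (1 + - (1 / (2 * N%:R))) + (expR (- (3/4)) - 1/2) :> R.
    by field.
  rewrite -[X in _ <= X]addr0 lerD ?ler_pM2l ?expR_ge1Dx //.
  by rewrite subr_le0 expRN34_le_half.
have tail_le : N%:R * expR (- (n%:R / (8 * N%:R))) <= delta.
  have ratio_gt0 : 0 < N%:R / delta by rewrite divr_gt0.
  have le_exp : expR (- (n%:R / (8 * N%:R))) <= expR (- ln (N%:R / delta)).
    by rewrite ler_expR lerN2 ler_pdivlMr ?mulr_gt0 // mulrC.
  rewrite [X in _ <= X]expRN lnK ?posrE // invf_div in le_exp.
  by rewrite -ler_pdivlMl // [_^-1 * _]mulrC.
apply: le_trans (_ : _ <= N%:R * expR (3/4 * (n%:R / (2 * N%:R)))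
                       * (N%:R ^+ n * expR (n%:R * - (1 / (2 * N%:R))))) _.
  rewrite ler_pM2l ?mulr_gt0 ?expR_gt0 // expRM_natl -exprMn.
  apply: lerXn2r base_le; rewrite nnegrE ?mulr_ge0 ?expR_ge0 //.
  by rewrite addr_ge0 ?expR_ge0 // subr_ge0 ler1n.
rewrite mulrCA -[N%:R * _ * _]mulrA -expRD [delta * _]mulrC.
rewrite ler_pM2l ?exprn_gt0 //.
suff -> : 3/4 * (n%:R / (2 * N%:R)) + n%:R * - (1 / (2 * N%:R))
          = - (n%:R / (8 * N%:R)) :> R by [].
by field.
Qed.

Lemma iid_coverage_prob (R : realType) (J : finType) (S : {set J}) (n : nat) (delta : R)
    (E : {ffun 'I_n -> J} -> Prop) :
  (0 < #|S|)%N -> 0 < delta -> 8 * #|S|%:R * ln (#|S|%:R / delta) <= n%:R ->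
  (forall w : {ffun 'I_n -> J}, [forall k, w k \in S] ->
     (forall b, b \in S -> n%:R / (2 * #|S|%:R) <= (nhits w b)%:R :> R) -> E w) ->
  1 - delta <= (\sum_(w : {ffun 'I_n -> J} | [forall k, w k \in S]) `[< E w >]%:R)
               / #|S|%:R ^+ n.
Proof.
move=> S_gt0 delta_gt0 hn covered_E.
set c : R := n%:R / (2 * #|S|%:R).
have indicator_ge (w : {ffun 'I_n -> J}) : [forall k, w k \in S] ->
    1 - [exists (b | b \in S), (nhits w b)%:R < c]%:R <= `[< E w >]%:R :> R.
  move=> wS; case: exists_inP => [_ | uncovered]; first by rewrite subrr ler0n.
  rewrite asboolT ?subr0 //; apply: covered_E wS _ => b bS.
  by rewrite leNgt; apply/negP => hb; apply: uncovered; exists b.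
have count_samples :
    \sum_(w : {ffun 'I_n -> J} | [forall k, w k \in S]) 1 = #|S|%:R ^+ n :> R.
  transitivity (\sum_(w : {ffun 'I_n -> J} | [forall k, w k \in S]) \prod_(k < n) 1 : R).
    by apply: eq_bigr => w _; rewrite big1.
  by rewrite (big_ffun_in_prod S n (fun=> 1)) sumr_const.
rewrite ler_pdivlMr ?exprn_gt0 ?ltr0n //.
apply: le_trans (ler_sum _ indicator_ge); rewrite sumrB count_samples.
have := card_undercovered_le S n c (_ : 0 <= 3/4).
have := undercovered_bound_le S_gt0 delta_gt0 hn.
rewrite -/c; lra.
Qed.

Section QuadraticForms.
Variables (R : comPzRingType) (d : nat).
Implicit Types (x v : 'cV[R]_d) (M N : 'M[R]_d).

Definition qform x M : R := (x^T *m M *m x) 0 0.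
Definition vdot x v : R := (x^T *m v) 0 0.

Lemma qformB x M N : qform x (M - N) = qform x M - qform x N.
Proof. by rewrite /qform mulmxBr mulmxBl !mxE. Qed.

Lemma qformZ x c M : qform x (c *: M) = c * qform x M.
Proof. by rewrite /qform -scalemxAr -scalemxAl mxE. Qed.

Lemma qform_sum x (I : finType) (F : I -> 'M[R]_d) :
  qform x (\sum_i F i) = \sum_i qform x (F i).
Proof. by rewrite /qform mulmx_sumr mulmx_suml summxE. Qed.

Lemma qform_outer x v : qform x (v *m v^T) = vdot x v ^+ 2.
Proof.
rewrite /qform /vdot mulmxA -(mulmxA _ v^T) -[v^T *m x]trmxK trmx_mul trmxK.
by rewrite mxE big_ord1 [in X in _ * X]mxE expr2.
Qed.

Lemma vdotE x v : vdot x v = \sum_j x j 0 * v j 0.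
Proof. by rewrite /vdot mxE; apply: eq_bigr => j _; rewrite mxE. Qed.

End QuadraticForms.

Section RealInequalities.
Variable R : realDomainType.

Lemma sqr_sum_le_card (I : finType) (D : {set I}) (u : I -> R) :
  (\sum_(g in D) u g) ^+ 2 <= #|D|%:R * \sum_(g in D) u g ^+ 2.
Proof.
set S1 := \sum_(g in D) u g; set S2 := \sum_(g in D) u g ^+ 2.
have inner g : \sum_(h in D) (u g - u h) ^+ 2 = #|D|%:R * u g ^+ 2 - 2 * u g * S1 + S2.
  have -> : \sum_(h in D) (u g - u h) ^+ 2 = \sum_(h in D) u g ^+ 2
      - \sum_(h in D) 2 * u g * u h + \sum_(h in D) u h ^+ 2.
    by rewrite -sumrB -big_split /=; apply: eq_bigr => h _; ring.
  by rewrite sumr_const -mulr_sumr -[u g ^+ 2 *+ _]mulr_natl.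
have sum_sqr_diff : \sum_(g in D) \sum_(h in D) (u g - u h) ^+ 2
                    = 2 * (#|D|%:R * S2 - S1 ^+ 2).
  rewrite (eq_bigr _ (fun g _ => inner g)) !big_split /= sumrN -!mulr_suml.
  by rewrite -!mulr_sumr sumr_const -/S1 -/S2 -[S2 *+ _]mulr_natl; ring.
have : 0 <= \sum_(g in D) \sum_(h in D) (u g - u h) ^+ 2.
  by do 2!(apply: sumr_ge0 => ? _); exact: sqr_ge0.
by rewrite sum_sqr_diff pmulr_rge0 // subr_ge0.
Qed.

Lemma sumr_le_subset (I : finType) (A B : {set I}) (F : I -> R) :
  B \subset A -> (forall i, 0 <= F i) -> \sum_(i in B) F i <= \sum_(i in A) F i.
Proof.
move=> BA F_ge0; rewrite [X in _ <= X](big_setID B) /= (setIidPr BA) lerDl.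
exact: sumr_ge0.
Qed.

(* Cauchy-Schwarz for the vectors [(1 - k, sqrt k)] and [(u0, b / sqrt k)]. *)
Lemma sqr_affine_le (k u0 b B : R) :
  0 <= k -> b ^+ 2 <= k * B -> 0 <= B ->
  ((1 - k) * u0 + b) ^+ 2 <= ((k - 1) ^+ 2 + k) * (u0 ^+ 2 + B).
Proof.
have [-> _ | k_neq0 k_ge0] := eqVneq k 0; move=> hb B_ge0.
  have -> : b = 0 by apply/eqP; rewrite -sqrf_eq0 eq_le sqr_ge0 andbT -(mul0r B).
  by rewrite subr0 mul1r addr0 sub0r sqrrN expr1n addr0 mul1r lerDl.
have k_gt0 : 0 < k by rewrite lt_def k_neq0.
rewrite -subr_ge0 -(pmulr_rge0 _ k_gt0).
have -> : k * (((k - 1) ^+ 2 + k) * (u0 ^+ 2 + B) - ((1 - k) * u0 + b) ^+ 2) =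
  (k * u0 - (1 - k) * b) ^+ 2 + ((k - 1) ^+ 2 + k) * (k * B - b ^+ 2) by ring.
by rewrite addr_ge0 ?sqr_ge0 // mulr_ge0 ?subr_ge0 // addr_ge0 ?sqr_ge0.
Qed.

End RealInequalities.

Definition symdiff (T : finType) (A B : {set T}) : {set T} := (A :\: B) :|: (B :\: A).

Lemma in_symdiff (T : finType) (A B : {set T}) x :
  (x \in symdiff A B) = ((x \in A) != (x \in B)).
Proof. by rewrite /symdiff !inE; case: (x \in A); case: (x \in B). Qed.

Section Features.
Variables (R : realType) (m : nat) (T : finType).
Implicit Types (a b : joint m T) (i : 'I_m) (s : {set T}) (f g : T).

Definition load_others b i f : nat := #|[set j | (j != i) && (f \in b j)]|.

Lemma load_split b i f : load b f = ((f \in b i) + load_others b i f)%N.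
Proof.
rewrite /load (cardsD1 i) inE; congr (_ + _)%N.
by apply: eq_card => j; rewrite !inE.
Qed.

Lemma load_others_upd b i s f : load_others (upd b i s) i f = load_others b i f.
Proof. by apply: eq_card => j; rewrite !inE ffunE; case: (j == i). Qed.

Lemma upd_at b i s : upd b i s i = s.
Proof. by rewrite ffunE eqxx. Qed.

Lemma toggle_at a i f : toggle a i f i = symdiff (a i) [set f].
Proof. exact: upd_at. Qed.

Lemma in_toggle a i g f :
  (f \in toggle a i g i) = if f == g then f \notin a i else f \in a i.
Proof. by rewrite toggle_at in_symdiff inE; case: (f == g); case: (f \in a i). Qed.

Lemma feat_entry b i j :
  feat R b i j 0 = if ((enum_val j).1 \in b i) &&
                      (load_others b i (enum_val j).1 == (enum_val j).2 :> nat)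
                   then 1 else 0.
Proof.
rewrite mxE; case: (enum_val j) => f l /=; rewrite (load_split b i).
by case: (f \in b i) => //=; rewrite add1n eqSS.
Qed.

Lemma feat_upd_entry a i s j :
  feat R (upd a i s) i j 0 = feat R a i j 0 +
    \sum_(g in symdiff s (a i)) (feat R (toggle a i g) i j 0 - feat R a i j 0).
Proof.
rewrite !feat_entry upd_at load_others_upd.
under eq_bigr do rewrite feat_entry in_toggle load_others_upd.
set f := (enum_val j).1.
have [fD | fND] := boolP (f \in symdiff s (a i)).
  rewrite (bigD1 f) //= eqxx big1 => [|g /andP[_ gf]]; last first.
    by rewrite eq_sym (negbTE gf) subrr.
  rewrite addr0 addrC subrK.
  by move: fD; rewrite in_symdiff; case: (f \in s); case: (f \in a i).
rewrite big1 => [|g gD]; last first.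
  have -> : (f == g) = false by apply: contraNF fND => /eqP ->.
  by rewrite subrr.
by move: fND; rewrite addr0 in_symdiff negbK => /eqP ->.
Qed.

Lemma vdot_feat_upd a i s (x : 'cV[R]_(Defs.dim m T)) :
  vdot x (feat R (upd a i s) i) =
    (1 - #|symdiff s (a i)|%:R) * vdot x (feat R a i) +
    \sum_(g in symdiff s (a i)) vdot x (feat R (toggle a i g) i).
Proof.
rewrite !vdotE; under eq_bigr do rewrite feat_upd_entry mulrDr mulr_sumr.
rewrite big_split /= exchange_big /=.
under [X in _ + X]eq_bigr do rewrite (eq_bigr _ (fun j _ => mulrBr _ _ _)) sumrB.
under [X in _ = _ + X]eq_bigr do rewrite vdotE.
by rewrite sumrB sumr_const -[_ *+ #|_|]mulr_natl; ring.
Qed.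

End Features.

Section Deviations.
Variables (R : realType) (m : nat) (T : finType).
Implicit Types (a : joint m T) (i : 'I_m) (f : T).

Definition toggle_mass (x : 'cV[R]_(Defs.dim m T)) a i : R :=
  vdot x (feat R a i) ^+ 2 + \sum_f vdot x (feat R (toggle a i f) i) ^+ 2.

Lemma toggle_mass_ge0 x a i : 0 <= toggle_mass x a i.
Proof. by rewrite addr_ge0 ?sqr_ge0 ?sumr_ge0 // => f _; exact: sqr_ge0. Qed.

Lemma vdot_feat_upd_sqr_le a i s x : (0 < #|T|)%N ->
  vdot x (feat R (upd a i s) i) ^+ 2 <= #|T|%:R ^+ 2 * toggle_mass x a i.
Proof.
move=> T_gt0; rewrite vdot_feat_upd.
set D := symdiff s (a i); set u := fun g => vdot x (feat R (toggle a i g) i).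
have D_le : (#|D|%:R : R) <= #|T|%:R by rewrite ler_nat max_card.
have massD_le : \sum_(g in D) u g ^+ 2 <= \sum_g u g ^+ 2.
  by rewrite [X in _ <= X](bigID (mem D)) /= lerDl sumr_ge0 // => g _; exact: sqr_ge0.
apply: le_trans (sqr_affine_le _ _ (sqr_sum_le_card D u) _) _.
- exact: ler0n.
- by apply: sumr_ge0 => g _; exact: sqr_ge0.
apply: ler_pM.
- by rewrite addr_ge0 ?sqr_ge0 ?ler0n.
- by rewrite addr_ge0 ?sqr_ge0 // sumr_ge0 // => g _; exact: sqr_ge0.
- (* [F^2 - (k - 1)^2 - k = (F - k) (F + k - 1) + (F - 1)] *)
  have : (1 : R) <= #|T|%:R by rewrite ler1n.
  by have := ler0n R #|D|; nra.
- by rewrite lerD2l.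
Qed.

Lemma toggle_neq a i f : toggle a i f i != a i.
Proof.
apply/negP => /eqP same; have := in_toggle a i f f.
by rewrite same eqxx; case: (f \in a i).
Qed.

Lemma toggle_inj a i i' f f' : toggle a i f = toggle a i' f' -> i = i' /\ f = f'.
Proof.
move=> eq_toggle.
have eq_i : i = i'.
  apply/eqP; apply: contraT => neq_i.
  have := congr1 (fun b : joint m T => b i) eq_toggle.
  rewrite /= /toggle !ffunE eqxx (negbTE neq_i) => same.
  by have := toggle_neq a i f; rewrite toggle_at /symdiff same eqxx.
subst i'; split=> //; have := congr1 (fun b : joint m T => f \in b i) eq_toggle.
by rewrite /= !in_toggle eqxx; case: (f =P f') => // _; case: (f \in a i).
Qed.

Lemma notin_toggles a : a \notin [set toggle a i f | i : 'I_m, f : T].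
Proof.
apply/imset2P => -[i f _ _ same].
by have := toggle_neq a i f; rewrite -same eqxx.
Qed.

Lemma card_suppS a : #|suppS a| = (m * #|T|).+1.
Proof.
rewrite /suppS cardsU1 notin_toggles.
have -> : [set toggle a i f | i : 'I_m, f : T] =
          uncurry (toggle a) @: setX [set: 'I_m] [set: T].
  apply/setP => b; apply/imset2P/imsetP => [[i f _ _ ->] | [[i f] _ ->]].
  - by exists (i, f); rewrite ?inE.
  - by exists i f.
rewrite card_imset; first by rewrite cardsX !cardsT card_ord.
by move=> [i f] [i' f'] /toggle_inj [-> ->].
Qed.

Lemma toggle_mass_le_sum_suppS x a i :
  toggle_mass x a i <= \sum_(b in suppS a) vdot x (feat R b i) ^+ 2.
Proof.
rewrite /suppS big_setU1 ?notin_toggles //= lerD2l.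
have toggle_i_inj : injective (toggle a i) by move=> f f' /toggle_inj [].
rewrite -(big_imset (fun b => vdot x (feat R b i) ^+ 2) (in2W toggle_i_inj)) /=.
apply: sumr_le_subset => [|b]; last exact: sqr_ge0.
by apply/subsetP => _ /imsetP [f _ ->]; apply/imset2P; exists i f.
Qed.

End Deviations.

Section CovarianceDomination.
Variables (R : realType) (m : nat) (T : finType).
Implicit Types (a : joint m T) (i : 'I_m) (x : 'cV[R]_(Defs.dim m T)).

Lemma qform_exp_outer_le a i p x : is_dist p -> (0 < #|T|)%N ->
  qform x (exp_outer a i p) <= #|T|%:R ^+ 2 * toggle_mass x a i.
Proof.
move=> [p_ge0 p_sum1] T_gt0; rewrite qform_sum.
under eq_bigr do rewrite qformZ qform_outer.
apply: le_trans (ler_sum _ (fun s _ => ler_wpM2l (p_ge0 s) (vdot_feat_upd_sqr_le a i s x T_gt0))) _.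
by rewrite -mulr_suml p_sum1 mul1r.
Qed.

Lemma qform_sample_cov_ge a n (w : {ffun 'I_n -> joint m T}) (c : R) i x :
  0 <= c -> [forall k, w k \in suppS a] ->
  (forall b, b \in suppS a -> c <= (nhits w b)%:R) ->
  c * toggle_mass x a i <= qform x (\sum_(k < n) \sum_(j < m) outer (feat R (w k) j)).
Proof.
move=> c_ge0 wS covered; rewrite qform_sum.
under eq_bigr do rewrite qform_sum; under eq_bigr do under eq_bigr do rewrite qform_outer.
apply: le_trans (_ : _ <= \sum_(k < n) vdot x (feat R (w k) i) ^+ 2) _; last first.
  apply: ler_sum => k _; rewrite (bigD1 i) //= lerDl.
  by apply: sumr_ge0 => j _; exact: sqr_ge0.
rewrite (sum_nhits (fun b => vdot x (feat R b i) ^+ 2) wS).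
apply: le_trans (ler_wpM2l c_ge0 (toggle_mass_le_sum_suppS x a i)) _.
rewrite mulr_sumr; apply: ler_sum => b bS.
by rewrite ler_wpM2r ?sqr_ge0 ?covered.
Qed.

Lemma good_event_of_coverage a n (w : {ffun 'I_n -> joint m T}) :
  (0 < m)%N -> (2 <= #|T|)%N -> [forall k, w k \in suppS a] ->
  (forall b, b \in suppS a ->
     n%:R / (2 * ((m * #|T|).+1)%:R) <= (nhits w b)%:R :> R) ->
  good_event R a w.
Proof.
move=> m_gt0 T_ge2 wS covered i p p_dist x.
set F : R := #|T|%:R; set c : R := n%:R / (2 * m%:R * F ^+ 4).
set c' : R := n%:R / (2 * ((m * #|T|).+1)%:R).
have T_gt0 : (0 < #|T|)%N by apply: leq_trans T_ge2.
have c'_ge0 : 0 <= c' by rewrite divr_ge0 ?mulr_ge0 ?ler0n.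
have coef_le : c * F ^+ 2 <= c'.
  have F_gt0 : 0 < F by rewrite ltr0n.
  have mF_le : ((m * #|T|).+1)%:R <= m%:R * F ^+ 2 :> R.
    by rewrite -natrX -natrM ler_nat; nia.
  have -> : c * F ^+ 2 = n%:R / (2 * (m%:R * F ^+ 2)).
    by rewrite /c; field; rewrite !pnatr_eq0 -!lt0n T_gt0 m_gt0.
  apply: ler_wpM2l; first exact: ler0n.
  by rewrite lef_pV2 ?posrE ?mulr_gt0 ?exprn_gt0 ?ltr0n // ler_pM2l.
have c_ge0 : 0 <= c by rewrite divr_ge0 ?mulr_ge0 ?exprn_ge0 ?ler0n.
have exp_le := ler_wpM2l c_ge0 (qform_exp_outer_le a i x p_dist T_gt0).
have mass_le := ler_wpM2r (toggle_mass_ge0 x a i) coef_le.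
have cov_ge := qform_sample_cov_ge i x c'_ge0 wS covered.
change (0 <= qform x (covV R w - (1%:M + c *: exp_outer a i p))).
rewrite /covV opprD addrACA subrr add0r qformB qformZ.
by rewrite mulrA in exp_le; lra.
Qed.

End CovarianceDomination.

Theorem mainTheorem8 (R : realType) (m : nat) (T : finType)
    (r : T -> nat -> R) (astar : joint m T) (delta : R) (n : nat) :
  (0 < m)%N -> (2 <= #|T|)%N ->
  is_pure_NE r astar ->
  0 < delta < 1 ->
  8 * ((m * #|T|).+1)%:R * ln (((m * #|T|).+1)%:R / delta) <= n%:R ->
  1 - delta <= @prob_iid_unif R m T (suppS astar) n (@good_event R m T astar n).
Proof.
move=> m_gt0 T_ge2 _ /andP[delta_gt0 _] hn.
apply: iid_coverage_prob => //; rewrite ?card_suppS //.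
by move=> w; exact: good_event_of_coverage.
Qed.
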